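(* Let $G=(V,E)$ be $(2,2)$-$C_i$-tight and let $v\in V$ have degree 3 with $N(v)\cap N(v')=\{x,x'\}$, so $N(v)=\{x,x',y\}$. Then, after possibly interchanging the names of $x$ and $x'$, one of the following holds: (1) $xy,x'y,xy',x'y'\in E$ and $G[\{v,v',x,x',y,y'\}]\cong F_1$; (2) $xy,x'y'\in E$, $xy',x'y\notin E$, and $G-\{v,v'\}+\{xy',x'y\}$ is $(2,2)$-$C_i$-tight; (3) $xy,x'y,xy',x'y'\notin E$, and either $G-\{v,v'\}+\{xy,x'y'\}$ or $G-\{v,v'\}+\{xy',x'y\}$ is $(2,2)$-$C_i$-tight.
   Context: A $\mathbb{Z}_2$-symmetric graph is a finite simple graph $G=(V,E)$ with an automorphism $\theta$, $\theta^2=\mathrm{id}$; write $v'=\theta(v)$. A vertex is fixed if $v'=v$; an edge $uv$ is fixed if $\{u',v'\}=\{u,v\}$. $G$ is $(2,2)$-sparse if every subgraph $(V',E')$ with $V'\ne\emptyset$ has $|E'|\le2|V'|-2$, $(2,2)$-tight if also $|E|=2|V|-2$. $G$ is $(2,2)$-$C_i$-tight if it is $(2,2)$-tight and $\theta$ fixes no vertex and no edge. $F_1$ is the graph on six vertices $a,b,c,d,e,f$ whose edges are all edges between $\{c,d\}$ and $\{a,b,e,f\}$ together with $ab$ and $ef$ (10 edges). $G-\{v,v'\}+\{st,s't'\}$ denotes deleting $v,v'$ and adding edges $st,s't'$ with the restricted involution. *)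

(* A graph is a vertex set V : {set T} inside an ambient
   finite type T, with edge set E : {set {set T}} of 2-element subsets. *)
From mathcomp Require Import all_boot.
Set Implicit Arguments. Unset Strict Implicit. Unset Printing Implicit Defensive.

Section Defs.
Variable T : finType.

Definition simple_graph (V : {set T}) (E : {set {set T}}) : Prop :=
  forall f, f \in E -> f \subset V /\ #|f| = 2.

Definition Z2_symmetric (V : {set T}) (E : {set {set T}}) (th : T -> T) : Prop :=
  [/\ simple_graph V E,
      {in V, forall x, th x \in V},
      {in V, forall x, th (th x) = x} &
      forall f, f \in E -> th @: f \in E].

Definition sparse22 (V : {set T}) (E : {set {set T}}) : Prop :=
  forall (V' : {set T}) (E' : {set {set T}}),
    V' \subset V -> E' \subset E -> (forall f, f \in E' -> f \subset V') ->
    V' != set0 -> #|E'| + 2 <= 2 * #|V'|.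

Definition tight22 (V : {set T}) (E : {set {set T}}) : Prop :=
  sparse22 V E /\ #|E| + 2 = 2 * #|V|.

Definition Ci_tight (V : {set T}) (E : {set {set T}}) (th : T -> T) : Prop :=
  [/\ Z2_symmetric V E th, tight22 V E,
      {in V, forall x, th x != x} &
      forall f, f \in E -> th @: f != f].

Definition nbhd (V : {set T}) (E : {set {set T}}) (v : T) : {set T} :=
  [set u in V | [set v; u] \in E].

Definition red_V (V : {set T}) (th : T -> T) (v : T) : {set T} :=
  V :\: [set v; th v].
Definition red_E (V : {set T}) (E : {set {set T}}) (th : T -> T) (v s t : T)
  : {set {set T}} :=
  [set f in E | f \subset red_V V th v] :|: [set [set s; t]; [set th s; th t]].

(* the graph F_1 on 'I_6 with a,b,c,d,e,f = 0,1,2,3,4,5 :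
   all edges between {c,d} and {a,b,e,f}, plus ab and ef *)
Definition F1_adj (i j : 'I_6) : bool :=
  let i := nat_of_ord i in let j := nat_of_ord j in
  let cd k := (k == 2) || (k == 3) in
  [|| (cd i && ~~ cd j), (cd j && ~~ cd i),
      [&& i != j, i <= 1 & j <= 1] | [&& i != j, 4 <= i & 4 <= j]].
Definition F1_edges : {set {set 'I_6}} :=
  [set f : {set 'I_6} | [exists i, exists j, (f == [set i; j]) && F1_adj i j]].

Definition induced_iso_F1 (E : {set {set T}}) (S : {set T}) : Prop :=
  exists phi : 'I_6 -> T,
    [/\ injective phi, phi @: setT = S &
        forall i j : 'I_6, ([set phi i; phi j] \in E) = ([set i; j] \in F1_edges)].

End Defs.

(* Deleting v and v' removes six edges, so G_0 = G - {v,v'} has 2|V_0| - 4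
   edges and adding a symmetric pair ab, a'b' (a in {x,x'}, b in {y,y'})
   restores the count.  The result is (2,2)-sparse unless a tight set X of
   G_0 contains a and b: a set containing a, b, a', b' with at least
   2|X| - 3 edges cannot exist, since together with v and v' it would violate
   sparsity.  A tight X through a and b is disjoint from its image: otherwise
   X u th(X) is tight and contains N(v), and adding v violates sparsity.  Such
   a blocker also rules out the edge ab', which would give U = X u th(X) at
   least 2|U| - 3 edges while U contains N(v) u N(v').  Finally blockers for
   xy and xy' would unite into a tight set through x and y meeting its image,
   so when no cross edge exists one of the two reductions succeeds. *)

From mathcomp Require Import all_boot zify.
Set Implicit Arguments. Unset Strict Implicit. Unset Printing Implicit Defensive.

Section EdgesWithin.
Variable T : finType.
Implicit Types (V U W X A B : {set T}) (E : {set {set T}}) (th : T -> T).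

Definition edges_within E U := [set f in E | f \subset U].

Definition tight_set E U := #|edges_within E U| + 2 == 2 * #|U|.

Lemma edges_withinS E U U' :
  U \subset U' -> edges_within E U \subset edges_within E U'.
Proof.
move=> sUU'; apply/subsetP=> f; rewrite !inE => /andP[-> /subset_trans]; exact.
Qed.

Lemma edges_withinI E A B :
  edges_within E A :&: edges_within E B = edges_within E (A :&: B).
Proof. by apply/setP=> f; rewrite !inE subsetI andbACA andbb. Qed.

Lemma edges_withinU E A B :
  edges_within E A :|: edges_within E B \subset edges_within E (A :|: B).
Proof. by rewrite subUset !edges_withinS ?subsetUl ?subsetUr. Qed.

Lemma edges_within0 V E : simple_graph V E -> edges_within E set0 = set0.
Proof.
move=> sg; apply/setP=> f; rewrite !inE subset0.
by case fE: (f \in E) => //=; apply/eqP=> f0; have [_] := sg f fE; rewrite f0 cards0.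
Qed.

Lemma edges_within_id V E : simple_graph V E -> edges_within E V = E.
Proof. by move=> sg; apply/setP=> f; rewrite inE; case fE: (f \in E); rewrite //= (sg f fE).1. Qed.

Lemma sparse22_edges_within V E U : sparse22 V E -> U \subset V -> U != set0 ->
  #|edges_within E U| + 2 <= 2 * #|U|.
Proof.
by move=> sp sUV; apply: sp => // [|f]; [apply/subsetP=> f|]; rewrite inE => /andP[].
Qed.

Lemma tight_set_neq0 E U : tight_set E U -> U != set0.
Proof. by apply: contraTneq => ->; rewrite /tight_set cards0 addn2. Qed.

Lemma tight_setU V E A B : sparse22 V E -> A \subset V -> B \subset V ->
  A :&: B != set0 -> tight_set E A -> tight_set E B -> tight_set E (A :|: B).
Proof.
move=> sp sAV sBV AB0 /eqP tA /eqP tB.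
have supermod : #|edges_within E A| + #|edges_within E B|
    <= #|edges_within E (A :|: B)| + #|edges_within E (A :&: B)|.
  by rewrite -cardsUI edges_withinI leq_add2r subset_leq_card ?edges_withinU.
have spI := sparse22_edges_within sp (subset_trans (subsetIl A B) sAV) AB0.
have ABV : A :|: B \subset V by rewrite subUset sAV.
have AB0' : A :|: B != set0.
  by case/set0Pn: AB0 => z /setIP[zA _]; apply/set0Pn; exists z; rewrite inE zA.
have spU := sparse22_edges_within sp ABV AB0'.
have AB := cardsUI A B.
apply/eqP; lia.
Qed.

Lemma set2C (a b : T) : [set a; b] = [set b; a].
Proof. by apply/setP=> z; rewrite !inE orbC. Qed.

Lemma set2_eq (i j k l : T) : [set i; j] = [set k; l] ->
  (i = k /\ j = l) \/ (i = l /\ j = k).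
Proof.
move=> e.
have : i \in [set k; l] by rewrite -e !inE eqxx.
have : j \in [set k; l] by rewrite -e !inE eqxx orbT.
have : k \in [set i; j] by rewrite e !inE eqxx.
have : l \in [set i; j] by rewrite e !inE eqxx orbT.
rewrite !inE => + + /orP[]/eqP ej /orP[]/eqP ei; subst => //; try by [left|right].
- by case/orP=> /eqP->; left.
- by move=> _ /orP[]/eqP->; right.
Qed.

Lemma set2_inj (w : T) : injective (fun u => [set w; u]).
Proof.
move=> u1 u2 /= e; have : u2 \in [set w; u1] by rewrite e !inE eqxx orbT.
have : u1 \in [set w; u2] by rewrite -e !inE eqxx orbT.
by rewrite !inE => /orP[]/eqP-> /orP[]/eqP.
Qed.

Lemma nbhd_sub V E w : nbhd V E w \subset V.
Proof. by apply/subsetP=> u; rewrite inE => /andP[]. Qed.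

Lemma nbhd_neq V E w u : simple_graph V E -> u \in nbhd V E w -> w != u.
Proof. by move=> sg; rewrite inE => /andP[_ /sg[_]]; rewrite cards2; case: (w != u). Qed.

Lemma nbhd_subsetD2 V E w w' : simple_graph V E -> [set w; w'] \notin E ->
  nbhd V E w \subset V :\: [set w; w'].
Proof.
move=> sg ww'; apply/subsetP=> u uN; have := uN; rewrite inE => /andP[uV wu].
rewrite !inE uV andbT negb_or eq_sym (nbhd_neq sg uN).
by apply: contraNneq ww' => <-.
Qed.

Lemma card_edges_withinU1 V E w U : simple_graph V E -> w \notin U ->
  #|edges_within E (w |: U)| = #|edges_within E U| + #|nbhd V E w :&: U|.
Proof.
move=> sg wU; pose S := [set [set w; u] | u in nbhd V E w :&: U].
have cardS : #|S| = #|nbhd V E w :&: U| by apply/card_imset/set2_inj.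
have dis : edges_within E U :&: S = set0.
  apply/setP=> f; rewrite !inE; apply/negbTE/andP=> [[/andP[_ fU] /imsetP[u _ fwu]]].
  by move: fU; rewrite fwu subUset sub1set (negbTE wU).
suff -> : edges_within E (w |: U) = edges_within E U :|: S.
  by rewrite cardsU dis cards0 subn0 cardS.
apply/setP=> f; rewrite in_setU !inE.
apply/idP/idP=> [/andP[fE fwU]|/orP[/andP[fE fU]|/imsetP[u]]].
- case wf: (w \in f); last first.
    apply/orP; left; rewrite fE; apply/subsetP=> z zf.
    by move/subsetP: fwU => /(_ z zf); rewrite in_setU1; case: eqP wf zf => // ->->.
  have [fV /eqP/cards2P[p [q [pq fpq]]]] := sg f fE.
  have [u [fwu wu]] : exists u, f = [set w; u] /\ w != u.
    move: wf; rewrite fpq !inE => /orP[]/eqP ->; first by exists q.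
    by exists p; rewrite set2C eq_sym.
  apply/orP; right; apply/imsetP; exists u => //.
  have uf : u \in f by rewrite fwu !inE eqxx orbT.
  rewrite !inE (subsetP fV u uf) -fwu fE /=.
  by move/subsetP: fwU => /(_ u uf); rewrite in_setU1 eq_sym (negbTE wu).
- by rewrite fE (subset_trans fU) ?subsetU1.
- rewrite !inE => /andP[/andP[_ ewu] uU] ->; rewrite ewu subUset !sub1set.
  by rewrite in_setU1 eqxx in_setU1 uU orbT.
Qed.

Lemma card_edges_within_nbhd V E w U : simple_graph V E -> sparse22 V E ->
  U \subset V -> w \in V -> w \notin U ->
  #|edges_within E U| + #|nbhd V E w :&: U| <= 2 * #|U|.
Proof.
move=> sg sp sUV wV wU; rewrite -(card_edges_withinU1 sg wU).
have wU0 : w |: U != set0 by apply/set0Pn; exists w; rewrite setU11.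
have := sparse22_edges_within sp _ wU0; rewrite cardsU1 wU.
by rewrite subUset sub1set wV sUV => /(_ isT); lia.
Qed.

Lemma card_edges_within_nbhd2 V E w1 w2 U : simple_graph V E -> sparse22 V E ->
  U \subset V -> w1 \in V -> w2 \in V -> w1 != w2 -> w1 \notin U -> w2 \notin U ->
  #|edges_within E U| + #|nbhd V E w1 :&: U| + #|nbhd V E w2 :&: U| <= 2 * #|U| + 2.
Proof.
move=> sg sp sUV w1V w2V w12 w1U w2U.
have w1U' : w1 \notin w2 |: U by rewrite in_setU1 (negbTE w12).
have := card_edges_within_nbhd sg sp _ w1V w1U'.
rewrite subUset sub1set w2V sUV (card_edges_withinU1 sg w2U) cardsU1 w2U => /(_ isT).
have : #|nbhd V E w1 :&: U| <= #|nbhd V E w1 :&: (w2 |: U)|.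
  by rewrite subset_leq_card // setIS // subsetUr.
lia.
Qed.

Lemma card_edges_withinU_cross V E A B f : simple_graph V E -> A :&: B = set0 ->
  f \in E -> f \subset A :|: B -> ~~ (f \subset A) -> ~~ (f \subset B) ->
  #|edges_within E A| + #|edges_within E B| < #|edges_within E (A :|: B)|.
Proof.
move=> sg AB0 fE fAB fA fB.
have dis : edges_within E A :&: edges_within E B = set0.
  by rewrite edges_withinI AB0 (edges_within0 sg).
have fnAB : f \notin edges_within E A :|: edges_within E B by rewrite !inE fE negb_or fA.
have sub : f |: (edges_within E A :|: edges_within E B) \subset edges_within E (A :|: B).
  by rewrite subUset sub1set inE fE fAB edges_withinU.
by move: (subset_leq_card sub); rewrite cardsU1 fnAB cardsU dis cards0 subn0.
Qed.

Lemma sparse22_edges_withinU2 V E W (e1 e2 : {set T}) : sparse22 V E -> W \subset V ->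
  (forall X, X \subset W -> e1 \subset X -> #|edges_within E X| + 3 <= 2 * #|X|) ->
  (forall X, X \subset W -> e2 \subset X -> #|edges_within E X| + 3 <= 2 * #|X|) ->
  (forall X, X \subset W -> e1 :|: e2 \subset X ->
     #|edges_within E X| + 4 <= 2 * #|X|) ->
  sparse22 W (edges_within E W :|: [set e1; e2]).
Proof.
move=> sp sWV sp1 sp2 sp12 V' E' sV'W sE' E'V' V'0.
have old_edges : E' \subset edges_within E V' :|: (E' :&: [set e1; e2]).
  apply/subsetP=> f fE'; move/subsetP: sE' => /(_ f fE'); rewrite !inE fE' /=.
  by case/orP=> [/andP[-> _]|->]; rewrite ?orbT ?E'V'.
have new_edges : #|E' :&: [set e1; e2]| <= (e1 \in E') + (e2 \in E').
  have card_in e : #|E' :&: [set e]| <= (e \in E').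
    case eE: (e \in E') => /=; first by rewrite -(cards1 e) subset_leq_card ?subsetIr.
    rewrite leqn0 cards_eq0; apply/eqP/setP=> g; rewrite !inE.
    by case: eqP => [->|]; rewrite ?eE ?andbF.
  by rewrite setIUr; apply: leq_trans (leq_card_setU _ _) (leq_add _ _).
have count : #|E'| <= #|edges_within E V'| + (e1 \in E') + (e2 \in E').
  rewrite -addnA; apply: leq_trans (subset_leq_card old_edges) _.
  by apply: leq_trans (leq_card_setU _ _) _; rewrite leq_add2l.
have key : #|edges_within E V'| + (e1 \in E') + (e2 \in E') + 2 <= 2 * #|V'|.
  rewrite -!addnA; case e1E': (e1 \in E'); case e2E': (e2 \in E').
  - by apply: sp12; rewrite ?subUset ?E'V'.
  - exact: sp1 (E'V' e1 e1E').
  - exact: sp2 (E'V' e2 e2E').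
  - exact: sparse22_edges_within sp (subset_trans sV'W sWV) V'0.
by move: key count; lia.
Qed.

Lemma imset_set2 th a b : th @: [set a; b] = [set th a; th b].
Proof. by rewrite imsetU1 imset_set1. Qed.

Lemma set2_th_neq th a b : th a != a -> th a != b -> [set a; b] != [set th a; th b].
Proof.
move=> aa ab; apply/eqP=> e; have : th a \in [set a; b] by rewrite e !inE eqxx.
by rewrite !inE (negbTE aa) (negbTE ab).
Qed.

Lemma set2_orbit V th z a : {in V, forall u, th (th u) = u} -> z \in V ->
  a \in [set z; th z] -> [set a; th a] = [set z; th z].
Proof. by move=> thK zV; rewrite !inE => /orP[]/eqP->; rewrite ?thK // set2C. Qed.

Lemma imset_sub V th A : {in V, forall u, th u \in V} -> A \subset V -> th @: A \subset V.
Proof. by move=> thV sAV; apply/subsetP=> _ /imsetP[u uA ->]; apply/thV/(subsetP sAV). Qed.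

Lemma imsetK_in V th A : {in V, forall u, th (th u) = u} -> A \subset V ->
  th @: (th @: A) = A.
Proof.
move=> thK sAV; rewrite -imset_comp -[RHS]imset_id.
by apply: eq_in_imset => u uA; apply/thK/(subsetP sAV).
Qed.

Lemma card_imset_invol V th A : {in V, forall u, th (th u) = u} -> A \subset V ->
  #|th @: A| = #|A|.
Proof.
move=> thK sAV; apply: card_in_imset => p q pA qA e.
by rewrite -(thK p) ?e ?thK ?(subsetP sAV).
Qed.

Lemma edge_thE V E th a b : Z2_symmetric V E th -> a \in V -> b \in V ->
  ([set th a; th b] \in E) = ([set a; b] \in E).
Proof.
by case=> _ _ thK thE aV bV; apply/idP/idP=> /thE; rewrite imset_set2 ?thK.
Qed.

Lemma nbhd_th V E th u : Z2_symmetric V E th -> u \in V ->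
  nbhd V E (th u) = th @: nbhd V E u.
Proof.
move=> sym uV; have [_ thV thK _] := sym.
apply/setP=> w; apply/idP/imsetP=> [|[z zN ->]].
  rewrite inE => /andP[wV e]; exists (th w); rewrite ?thK //.
  by rewrite inE thV //= -(edge_thE sym) ?thV ?thK.
by have := zN; rewrite !inE => /andP[zV e]; rewrite thV //= (edge_thE sym).
Qed.

Lemma card_edges_within_imset V E th U : Z2_symmetric V E th -> U \subset V ->
  #|edges_within E U| <= #|edges_within E (th @: U)|.
Proof.
case=> _ _ thK thE sUV.
have inj : {in edges_within E U &, injective (fun f : {set T} => th @: f)}.
  move=> f g; rewrite !inE => /andP[_ fU] /andP[_ gU] e.
  by rewrite -(imsetK_in thK (subset_trans fU sUV)) e (imsetK_in thK (subset_trans gU sUV)).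
rewrite -(card_in_imset inj); apply/subset_leq_card/subsetP=> g /imsetP[f].
by rewrite !inE => /andP[fE fU] ->; rewrite thE //= imsetS.
Qed.

Lemma tight_set_imset V E th U : Z2_symmetric V E th -> sparse22 V E ->
  U \subset V -> tight_set E U -> tight_set E (th @: U).
Proof.
move=> sym sp sUV tU; have [_ thV thK _] := sym.
have le_edges := card_edges_within_imset sym sUV.
have nz : th @: U != set0.
  by case/set0Pn: (tight_set_neq0 tU) => u uU; apply/set0Pn; exists (th u); apply: imset_f.
have := sparse22_edges_within sp (imset_sub thV sUV) nz.
by move/eqP: tU; rewrite /tight_set (card_imset_invol thK sUV); lia.
Qed.

Lemma Ci_tight_edges_withinU2 V E th W a b : Ci_tight V E th ->
  W \subset V -> {in W, forall u, th u \in W} -> a \in W -> b \in W ->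
  a != b -> th a != b ->
  tight22 W (edges_within E W :|: [set [set a; b]; [set th a; th b]]) ->
  Ci_tight W (edges_within E W :|: [set [set a; b]; [set th a; th b]]) th.
Proof.
move=> [[sg thV thK thE] _ th_fixfree edge_fixfree] sWV thW aW bW ab a'b tW.
have thV_W u : u \in W -> u \in V by apply/subsetP.
have a'b' : th a != th b by apply: contra_neq ab => /(congr1 th); rewrite !thK ?thV_W.
have new_edge_moved : [set a; b] != [set th a; th b].
  by rewrite set2_th_neq // th_fixfree ?thV_W.
split=> // [|u /thV_W|f].
- split=> [f|u /thW //|u /thV_W /thK //|f].
  + rewrite !inE => /orP[/andP[/sg[_ f2] fW]|/orP[]/eqP->] //.
    * by rewrite subUset !sub1set aW bW cards2 ab.
    * by rewrite subUset !sub1set !thW // cards2 a'b'.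
  + rewrite !inE => /orP[/andP[fE fW]|/orP[]/eqP->].
    * by rewrite thE //= (imset_sub thW).
    * by rewrite imset_set2 eqxx !orbT.
    * by rewrite imset_set2 !thK ?thV_W // eqxx orbT.
- exact: th_fixfree.
- rewrite !inE => /orP[/andP[/edge_fixfree //]|/orP[]/eqP->].
    by rewrite imset_set2 eq_sym.
  by rewrite imset_set2 !thK ?thV_W.
Qed.

End EdgesWithin.

Lemma F1_adj_sym (i j : 'I_6) : F1_adj i j = F1_adj j i.
Proof. by case: i => [[|[|[|[|[|[|//]]]]]] ?]; case: j => [[|[|[|[|[|[|//]]]]]] ?]. Qed.

Lemma F1_edgesE (i j : 'I_6) : ([set i; j] \in F1_edges) = F1_adj i j.
Proof.
rewrite inE; apply/existsP/idP=> [[i0 /existsP[j0 /andP[/eqP e adj]]]|adj].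
  by case: (set2_eq e) => -[-> ->] //; rewrite F1_adj_sym.
by exists i; apply/existsP; exists j; rewrite eqxx.
Qed.

Section DegreeThreeVertex.
Variables (T : finType) (V : {set T}) (E : {set {set T}}) (th : T -> T) (v x y : T).
Hypotheses (HC : Ci_tight V E th) (vV : v \in V) (deg3 : #|nbhd V E v| = 3)
  (Nv : nbhd V E v = [set x; th x; y]).
Implicit Types (X W : {set T}) (a b : T).

Local Notation rV := (red_V V th v).
Local Notation Sx := [set x; th x].
Local Notation Sy := [set y; th y].

Let sym : Z2_symmetric V E th. Proof. by case: HC. Qed.
Let sp : sparse22 V E. Proof. by case: HC => _ []. Qed.
Let sg : simple_graph V E. Proof. by case: sym. Qed.
Let thV : {in V, forall u, th u \in V}. Proof. by case: sym. Qed.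
Let thK : {in V, forall u, th (th u) = u}. Proof. by case: sym. Qed.
Let th_fixfree : {in V, forall u, th u != u}. Proof. by case: HC. Qed.

Let no_fixed_edge u : u \in V -> [set u; th u] \notin E.
Proof.
case: HC => _ _ _ edge_fixfree uV; apply/negP=> /edge_fixfree.
by rewrite imset_set2 thK // set2C eqxx.
Qed.

Let v'V : th v \in V. Proof. exact: thV. Qed.
Let vv' : v != th v. Proof. by rewrite eq_sym th_fixfree. Qed.

Let xV : x \in V. Proof. by apply: (subsetP (nbhd_sub V E v)); rewrite Nv !inE eqxx. Qed.
Let yV : y \in V. Proof. by apply: (subsetP (nbhd_sub V E v)); rewrite Nv !inE eqxx orbT. Qed.

Let Nv' : nbhd V E (th v) = [set th x; x; th y].
Proof. by rewrite nbhd_th // Nv !imsetU !imset_set1 thK. Qed.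

Let Sx_th a : a \in Sx -> th a \in Sx.
Proof. by move=> aS; rewrite -(set2_orbit thK xV aS) !inE eqxx orbT. Qed.

Let y_notin_Sx : y \notin Sx.
Proof.
move: deg3; rewrite Nv setUC cardsU1 cards2.
by case: (y \in _); case: (x != th x).
Qed.

Let Sx_Sy_neq a b : a \in Sx -> b \in Sy -> a != b.
Proof.
move=> aS; rewrite !inE => /orP[]/eqP->; apply: contraNneq y_notin_Sx => e.
  by rewrite -e.
by rewrite -[y]thK // -e Sx_th.
Qed.

Let rV_sub : rV \subset V. Proof. exact: subsetDl. Qed.
Let v_notin_rV : v \notin rV. Proof. by rewrite !inE eqxx. Qed.
Let v'_notin_rV : th v \notin rV. Proof. by rewrite !inE eqxx orbT. Qed.

Let thrV : {in rV, forall u, th u \in rV}.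
Proof.
move=> u; rewrite !inE negb_or -andbA => /and3P[uv uv' uV].
rewrite negb_or thV // andbT; apply/andP; split.
- by apply: contraNneq uv' => e; rewrite -e thK.
- by apply: contraNneq uv => e; rewrite -(thK uV) e thK.
Qed.

Let Nv_sub_rV : nbhd V E v \subset rV.
Proof. exact: nbhd_subsetD2 sg (no_fixed_edge vV). Qed.

Let Nv'_sub_rV : nbhd V E (th v) \subset rV.
Proof.
rewrite /red_V set2C; apply: nbhd_subsetD2 sg _.
by rewrite -{2}(thK vV) no_fixed_edge.
Qed.

Let Sx_sub_rV : Sx \subset rV.
Proof. by apply: subset_trans Nv_sub_rV; rewrite Nv subsetUl. Qed.

Let Sy_sub_rV : Sy \subset rV.
Proof.
rewrite subUset !sub1set (subsetP Nv_sub_rV) ?(subsetP Nv'_sub_rV) //.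
  by rewrite Nv' !inE eqxx orbT.
by rewrite Nv !inE eqxx orbT.
Qed.

Let card_Nv' : #|nbhd V E (th v)| = 3.
Proof. by rewrite nbhd_th // (card_imset_invol thK) ?nbhd_sub. Qed.

Let card_edges_rV : #|edges_within E rV| + 4 = 2 * #|rV|.
Proof.
have [_ [_ cardE] _ _] := HC.
have defV : V = v |: (th v |: rV).
  rewrite setUA -/([set v; th v]) -{1}(setID V [set v; th v]) (setIidPr _) //.
  by rewrite subUset !sub1set vV.
have v_notin : v \notin th v |: rV by rewrite in_setU1 (negbTE vv').
have Nv_sub : nbhd V E v \subset th v |: rV := subset_trans Nv_sub_rV (subsetUr _ _).
move: cardE; rewrite -{1}(edges_within_id sg) {1 2}defV (card_edges_withinU1 sg v_notin).
rewrite (card_edges_withinU1 sg v'_notin_rV) (setIidPl Nv_sub) (setIidPl Nv'_sub_rV).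
rewrite deg3 card_Nv' !cardsU1 v_notin v'_notin_rV /= => cardE.
by clear -cardE; lia.
Qed.

Lemma no_tight_set_over_nbhd X :
  X \subset rV -> tight_set E X -> nbhd V E v \subset X -> False.
Proof.
move=> sX /eqP tX NX; have vX : v \notin X by apply: contra v_notin_rV; apply/subsetP.
have := card_edges_within_nbhd sg sp (subset_trans sX rV_sub) vV vX.
by rewrite (setIidPl NX) deg3 => nX; clear -tX nX; lia.
Qed.

Lemma card_edges_within_over_nbhds X : X \subset rV ->
  nbhd V E v :|: nbhd V E (th v) \subset X -> #|edges_within E X| + 4 <= 2 * #|X|.
Proof.
rewrite subUset => sX /andP[NX N'X].
have vX : v \notin X by apply: contra v_notin_rV; apply/subsetP.
have v'X : th v \notin X by apply: contra v'_notin_rV; apply/subsetP.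
have := card_edges_within_nbhd2 sg sp (subset_trans sX rV_sub) vV v'V vv' vX v'X.
by rewrite (setIidPl NX) (setIidPl N'X) deg3 card_Nv' => nX; clear -nX; lia.
Qed.

Let nbhds_sub X : Sx \subset X -> Sy \subset X ->
  nbhd V E v :|: nbhd V E (th v) \subset X.
Proof.
move=> /subsetP Sx_sub /subsetP Sy_sub.
have [xX x'X] : x \in X /\ th x \in X by split; apply: Sx_sub; rewrite !inE eqxx ?orbT.
have [yX y'X] : y \in X /\ th y \in X by split; apply: Sy_sub; rewrite !inE eqxx ?orbT.
by rewrite Nv Nv' !subUset !sub1set xX x'X yX y'X.
Qed.

Let orbit_subU X z a : z \in V -> a \in [set z; th z] -> a \in X ->
  [set z; th z] \subset X :|: th @: X.
Proof.
move=> zV aS aX; rewrite -(set2_orbit thK zV aS) subUset !sub1set !in_setU aX.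
by rewrite imset_f ?orbT.
Qed.

Lemma tight_blocker_disjoint a b X : a \in Sx -> b \in Sy ->
  X \subset rV -> tight_set E X -> a \in X -> b \in X -> X :&: th @: X = set0.
Proof.
move=> aS bS sX tX aX bX; apply/eqP; apply: contraT => meet; exfalso.
have sXV := subset_trans sX rV_sub.
have tU := tight_setU sp sXV (imset_sub thV sXV) meet tX (tight_set_imset sym sp sXV tX).
apply: (no_tight_set_over_nbhd _ tU); first by rewrite subUset sX (imset_sub thrV).
by apply: subset_trans (subsetUl _ _) (nbhds_sub (orbit_subU xV aS aX) (orbit_subU yV bS bX)).
Qed.

Lemma tight_blocker_cross_edge a b X : a \in Sx -> b \in Sy ->
  X \subset rV -> tight_set E X -> a \in X -> b \in X -> [set a; th b] \notin E.
Proof.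
move=> aS bS sX tX aX bX; apply/negP=> abE.
have dis := tight_blocker_disjoint aS bS sX tX aX bX.
have sXV := subset_trans sX rV_sub.
have tY := tight_set_imset sym sp sXV tX.
have b'X : th b \notin X.
  by apply/negP=> b'X; move: (in_set0 (th b)); rewrite -dis inE b'X imset_f.
have aY : a \notin th @: X.
  by apply/negP=> aY; move: (in_set0 a); rewrite -dis inE aX aY.
have cross : #|edges_within E X| + #|edges_within E (th @: X)| <
    #|edges_within E (X :|: th @: X)|.
  apply: card_edges_withinU_cross sg dis abE _ _ _.
  - by rewrite subUset !sub1set !in_setU aX imset_f ?orbT.
  - by rewrite subUset !sub1set (negbTE b'X) andbF.
  - by rewrite subUset !sub1set (negbTE aY).
have := card_edges_within_over_nbhds (_ : X :|: th @: X \subset rV)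
  (nbhds_sub (orbit_subU xV aS aX) (orbit_subU yV bS bX)).
rewrite subUset sX (imset_sub thrV) // cardsU dis cards0 subn0 => /(_ isT) nX.
by move/eqP: tX; move/eqP: tY; clear -cross nX; lia.
Qed.

Lemma tight_blockers_pair X W : X \subset rV -> W \subset rV ->
  tight_set E X -> tight_set E W -> x \in X -> y \in X -> x \in W -> th y \in W -> False.
Proof.
move=> sX sW tX tW xX yX xW y'W.
have meet : X :&: W != set0 by apply/set0Pn; exists x; rewrite inE xX.
have tU := tight_setU sp (subset_trans sX rV_sub) (subset_trans sW rV_sub) meet tX tW.
have xS : x \in Sx by rewrite !inE eqxx.
have yS : y \in Sy by rewrite !inE eqxx.
have sU : X :|: W \subset rV by rewrite subUset sX.
have xU : x \in X :|: W by rewrite inE xX.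
have yU : y \in X :|: W by rewrite inE yX.
apply/eqP/set0Pn: (tight_blocker_disjoint xS yS sU tU xU yU).
by exists y; rewrite inE yU -[y]thK // imset_f // inE y'W orbT.
Qed.

Lemma reduction_Ci_tight_or_blocker a b :
  a \in Sx -> b \in Sy -> [set a; b] \notin E ->
  Ci_tight rV (red_E V E th v a b) th \/
  exists2 X : {set T}, X \subset rV & [/\ tight_set E X, a \in X & b \in X].
Proof.
move=> aS bS abE.
have [/existsP[X /and4P[sX tX aX bX]]|no_blocker] :=
  boolP [exists X : {set T}, [&& X \subset rV, tight_set E X, a \in X & b \in X]].
  by right; exists X.
left.
have aR : a \in rV := subsetP Sx_sub_rV a aS.
have bR : b \in rV := subsetP Sy_sub_rV b bS.
have a'S := Sx_th aS.
have not_tight (Z : {set T}) : Z \subset rV -> a \in Z -> b \in Z ->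
    #|edges_within E Z| + 3 <= 2 * #|Z|.
  move=> sZ aZ bZ; have nz : Z != set0 by apply/set0Pn; exists a.
  have := sparse22_edges_within sp (subset_trans sZ rV_sub) nz.
  have : ~~ tight_set E Z.
    by apply: contra no_blocker => tZ; apply/existsP; exists Z; rewrite sZ tZ aZ.
  by rewrite /tight_set => ntZ spZ; clear -ntZ spZ; lia.
have new_edge_moved : [set a; b] != [set th a; th b].
  by rewrite set2_th_neq ?th_fixfree ?Sx_Sy_neq // (subsetP rV_sub).
have a'b'E : [set th a; th b] \notin E by rewrite (edge_thE sym) ?(subsetP rV_sub).
apply: (Ci_tight_edges_withinU2 HC) => //; rewrite ?Sx_Sy_neq //.
split; last first.
  rewrite cardsU cards2 new_edge_moved.
  suff -> : edges_within E rV :&: [set [set a; b]; [set th a; th b]] = set0.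
    by rewrite cards0 subn0 -card_edges_rV -addnA.
  apply/setP=> f; rewrite !inE; apply/negbTE/andP=> [[/andP[fE _] /orP[]/eqP ef]].
    by move: fE; rewrite ef (negbTE abE).
  by move: fE; rewrite ef (negbTE a'b'E).
apply: sparse22_edges_withinU2 sp rV_sub _ _ _ => Z sZ.
- by rewrite subUset !sub1set => /andP[aZ bZ]; apply: not_tight.
- rewrite subUset !sub1set => /andP[a'Z b'Z].
  have sZV := subset_trans sZ rV_sub.
  have := not_tight _ (imset_sub thrV sZ).
  rewrite -{1}(thK (subsetP rV_sub a aR)) -{1}(thK (subsetP rV_sub b bR)) !imset_f //.
  rewrite (card_imset_invol thK sZV) => /(_ isT isT).
  by apply: leq_trans; rewrite leq_add2r (card_edges_within_imset sym sZV).
- rewrite !subUset !sub1set => /andP[/andP[aZ bZ] /andP[a'Z b'Z]].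
  apply: card_edges_within_over_nbhds sZ (nbhds_sub _ _).
    by rewrite -(set2_orbit thK xV aS) subUset !sub1set aZ.
  by rewrite -(set2_orbit thK yV bS) subUset !sub1set bZ.
Qed.

Lemma induced_F1 : [set x; y] \in E -> [set th x; y] \in E ->
  induced_iso_F1 E [set v; th v; x; th x; y; th y].
Proof.
move=> xyE x'yE.
have [xS x'S] : x \in Sx /\ th x \in Sx by rewrite !inE !eqxx orbT.
have [yS y'S] : y \in Sy /\ th y \in Sy by rewrite !inE !eqxx orbT.
have outside u : u \in rV -> (u != v) && (u != th v) by rewrite !inE negb_or => /andP[].
have /andP[xv xv'] := outside _ (subsetP Sx_sub_rV _ xS).
have /andP[x'v x'v'] := outside _ (subsetP Sx_sub_rV _ x'S).
have /andP[yv yv'] := outside _ (subsetP Sy_sub_rV _ yS).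
have /andP[y'v y'v'] := outside _ (subsetP Sy_sub_rV _ y'S).
have xy := Sx_Sy_neq xS yS; have xy' := Sx_Sy_neq xS y'S.
have x'y := Sx_Sy_neq x'S yS; have x'y' := Sx_Sy_neq x'S y'S.
have x'x := th_fixfree xV; have y'y := th_fixfree yV.
(* the vertices a, b, c, d, e, f of F_1 *)
pose s := [:: v; y; x; th x; th v; th y].
have us : uniq s.
  by rewrite /s /= !inE !negb_or; repeat (apply/andP; split); rewrite // eq_sym.
exists (fun i : 'I_6 => nth v s i); split.
- by move=> i j /eqP; rewrite nth_uniq // => /eqP /val_inj.
- apply/setP=> u; apply/imsetP/idP=> [[i _ ->]|].
    by case: i => [[|[|[|[|[|[|//]]]]]] ?]; rewrite !inE eqxx ?orbT.
  rewrite !inE => /orP[/orP[/orP[/orP[/orP[]|]|]|]|] /eqP->.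
  + by exists (@Ordinal 6 0 isT).
  + by exists (@Ordinal 6 4 isT).
  + by exists (@Ordinal 6 2 isT).
  + by exists (@Ordinal 6 3 isT).
  + by exists (@Ordinal 6 1 isT).
  + by exists (@Ordinal 6 5 isT).
have edgeE w u : u \in V -> ([set w; u] \in E) = (u \in nbhd V E w) by rewrite inE => ->.
have [xV' yV'] : th x \in V /\ th y \in V by rewrite !thV.
have vx : [set v; x] \in E by rewrite edgeE // Nv !inE eqxx.
have vx' : [set v; th x] \in E by rewrite edgeE // Nv !inE eqxx orbT.
have vy : [set v; y] \in E by rewrite edgeE // Nv !inE eqxx orbT.
have v'x : [set th v; x] \in E by rewrite edgeE // Nv' !inE eqxx orbT.
have v'x' : [set th v; th x] \in E by rewrite edgeE // Nv' !inE eqxx.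
have v'y' : [set th v; th y] \in E by rewrite edgeE // Nv' !inE eqxx orbT.
have xy'E : [set x; th y] \in E by rewrite -{1}(thK xV) (edge_thE sym).
have x'y'E : [set th x; th y] \in E by rewrite (edge_thE sym).
have vy'E : [set v; th y] \in E = false.
  by rewrite edgeE // Nv !inE !(eq_sym (th y)) (negbTE xy') (negbTE x'y') eq_sym (negbTE y'y).
have v'yE : [set th v; y] \in E = false.
  by rewrite edgeE // Nv' !inE !(eq_sym y) (negbTE xy) (negbTE x'y) (negbTE y'y).
have loopE u : [set u; u] \in E = false.
  by apply/negbTE/negP=> /sg[_]; rewrite setUid cards1.
have vv'E := negbTE (no_fixed_edge vV); have xx'E := negbTE (no_fixed_edge xV).
have yy'E := negbTE (no_fixed_edge yV).
have edge_rules := (vx, vx', vy, v'x, v'x', v'y', xyE, x'yE, xy'E, x'y'E,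
  vy'E, v'yE, vv'E, xx'E, yy'E).
move=> i j; rewrite F1_edgesE.
case: i => [[|[|[|[|[|[|//]]]]]] ?]; case: j => [[|[|[|[|[|[|//]]]]]] ?];
  rewrite /F1_adj /= ?loopE //; first [by rewrite !edge_rules | by rewrite set2C !edge_rules].
Qed.

End DegreeThreeVertex.

Theorem lemma5p5 (T : finType) (V : {set T}) (E : {set {set T}}) (th : T -> T)
  (v x y : T) :
  Ci_tight V E th -> v \in V ->
  #|nbhd V E v| = 3 ->
  nbhd V E v :&: nbhd V E (th v) = [set x; th x] ->
  nbhd V E v = [set x; th x; y] ->
  exists a : T, a \in [set x; th x] /\
   let a' := th a in let y' := th y in
   [\/ [/\ [set a; y] \in E, [set a'; y] \in E, [set a; y'] \in E,
           [set a'; y'] \in E &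
           induced_iso_F1 E [set v; th v; a; a'; y; y']],
       [/\ [set a; y] \in E, [set a'; y'] \in E, [set a; y'] \notin E,
           [set a'; y] \notin E &
           Ci_tight (red_V V th v) (red_E V E th v a y') th]
     | [/\ [set a; y] \notin E, [set a'; y] \notin E, [set a; y'] \notin E,
           [set a'; y'] \notin E &
           Ci_tight (red_V V th v) (red_E V E th v a y) th \/
           Ci_tight (red_V V th v) (red_E V E th v a y') th]].
Proof.
(* N(v) :&: N(v') = [set x; x'] follows from the other hypotheses. *)
move=> HC vV deg3 _ Nv; have [sym _ _ _] := HC; have [_ thV thK _] := sym.
have reduce := reduction_Ci_tight_or_blocker HC vV deg3 Nv.
have no_cross := tight_blocker_cross_edge HC vV deg3 Nv.
have [xV yV] : x \in V /\ y \in V by rewrite !(subsetP (nbhd_sub V E v)) // Nv !inE eqxx ?orbT.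
have [xS x'S] : x \in [set x; th x] /\ th x \in [set x; th x] by rewrite !inE !eqxx orbT.
have [yS y'S] : y \in [set y; th y] /\ th y \in [set y; th y] by rewrite !inE !eqxx orbT.
have x'y'E : ([set th x; th y] \in E) = ([set x; y] \in E) by rewrite (edge_thE sym).
have xy'E : ([set x; th y] \in E) = ([set th x; y] \in E).
  by rewrite -{1}(thK x xV) (edge_thE sym) ?thV.
case xyE: ([set x; y] \in E); case x'yE: ([set th x; y] \in E).
- exists x; split=> //=; apply: Or31; rewrite x'y'E xy'E xyE x'yE.
  by split=> //; apply: (induced_F1 HC vV deg3 Nv xyE x'yE).
- exists x; split=> //=; apply: Or32; rewrite x'y'E xy'E xyE x'yE; split=> //.
  case: (reduce _ _ xS y'S) => [|//|[X sX [tX xX y'X]]]; first by rewrite xy'E x'yE.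
  by move: (no_cross _ _ _ xS y'S sX tX xX y'X); rewrite thK ?xyE.
- exists (th x); split=> //=; apply: Or32; rewrite thK // x'y'E xy'E xyE x'yE; split=> //.
  case: (reduce _ _ x'S y'S) => [|//|[X sX [tX x'X y'X]]]; first by rewrite x'y'E xyE.
  by move: (no_cross _ _ _ x'S y'S sX tX x'X y'X); rewrite thK ?x'yE.
- exists x; split=> //=; apply: Or33; rewrite x'y'E xy'E xyE x'yE; split=> //.
  case: (reduce _ _ xS yS) => [||[X sX [tX xX yX]]]; [by rewrite xyE|by left|].
  case: (reduce _ _ xS y'S) => [||[W sW [tW xW y'W]]]; [by rewrite xy'E x'yE|by right|].
  by case: (tight_blockers_pair HC vV deg3 Nv sX sW tX tW xX yX xW y'W).
Qed.
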